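(* Let $b>0$ and let $f:(0,b)\to\mathbb{R}$ be real analytic and not identically zero. Let $\mathcal I=\{x\in(0,b):f(x)=0\}$. Assume that: (1) as $x\to b$ we have $\kappa(f,x)\to\infty$, and for every sequence $x_j\in(0,b)$ with $x_j\to0$ and $\mathrm{dist}(x_j,\mathcal I)\to0$ we have $\kappa(f,x_j)\to\infty$; (2) both as $x\to0$ and as $x\to b$ we have $\limsup|H(f,x)|\leq C$ for some constant $C>0$, where $H(f,x)=\frac{x^2f(x)f''(x)}{f(x)^2+x^2f'(x)^2}$. The part of this hypothesis concerning $x\to0$ (resp. $x\to b$) is automatically satisfied if $f$ admits an analytic extension to $(-\epsilon,b)$ (resp. $(0,b+\epsilon)$) for some $\epsilon>0$. Then $f$ is amenable.
   Context: Relative distance on $\mathbb{R}$: $\mathrm{dist}(x,y)=0$ if $x=y=0$, $\mathrm{dist}(x,y)=|\log(y/x)|$ if $xy>0$, and $\mathrm{dist}(x,y)=\infty$ otherwise; for a set $S$, $\mathrm{dist}(x,S)=\inf_{s\in S}\mathrm{dist}(x,s)$. For a real analytic function $f$ on an open set $\Omega\subseteq\mathbb{R}$, not identically zero, the condition number is $\kappa(f,x)=0$ if $x=0$, $\kappa(f,x)=\infty$ if $x\neq0$ and $f(x)=0$, and $\kappa(f,x)=|x|\,|f'(x)|/|f(x)|$ otherwise; set $\mu(f,x)=1+\kappa(f,x)$. The function $f:\Omega\to\mathbb{R}$ is called amenable if there is a constant $C>0$ such that for every $x\in\Omega$ with $\kappa(f,x)<\infty$, the set $B_x=\{y\in\mathbb{R}:\mathrm{dist}(y,x)<1/(C\mu(f,x))\}$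 is contained in $\Omega$, and $\mu(f,y)\leq C\mu(f,x)$ for all $y\in B_x$. *)

From Stdlib Require Import Reals Lra.
From Coquelicot Require Import Coquelicot.
Open Scope R_scope.

Definition real_analytic_on (a b : R) (f : R -> R) : Prop :=
  forall x0, a < x0 < b ->
    exists r, 0 < r /\ exists c : nat -> R,
      forall x, a < x < b -> Rabs (x - x0) < r -> is_pseries c (x - x0) (f x).

Definition reldist (x y : R) : Rbar :=
  if Req_EM_T x 0 then (if Req_EM_T y 0 then Finite 0 else p_infty)
  else if Rlt_dec 0 (x * y) then Finite (Rabs (ln (y / x)))
  else p_infty.

Definition reldist_set (x : R) (S : R -> Prop) : Rbar :=
  Glb_Rbar (fun d => exists s, S s /\ reldist x s = Finite d).

Definition kappa (f : R -> R) (x : R) : Rbar :=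
  if Req_EM_T x 0 then Finite 0
  else if Req_EM_T (f x) 0 then p_infty
  else Finite (Rabs x * Rabs (Derive f x) / Rabs (f x)).

Definition mu (f : R -> R) (x : R) : Rbar := Rbar_plus (Finite 1) (kappa f x).

Definition Hf (f : R -> R) (x : R) : R :=
  x ^ 2 * f x * Derive_n f 2 x / (f x ^ 2 + x ^ 2 * (Derive f x) ^ 2).

Definition amenable_on_interval (b : R) (f : R -> R) : Prop :=
  exists C, 0 < C /\
    forall x k, 0 < x < b -> kappa f x = Finite k ->
      let m := 1 + k in
      (forall y, Rbar_lt (reldist y x) (Finite (1 / (C * m))) -> 0 < y < b) /\
      (forall y, Rbar_lt (reldist y x) (Finite (1 / (C * m))) ->
                 Rbar_le (mu f y) (Finite (C * m))).

(* In the logarithmic chart t = ln x the relative distance becomes the usual distance, and the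
   weight w = (1 + e^2)^(-1/2), where e = x f'/f is the elasticity (|e| = kappa), is comparable
   to 1/mu.  Along t the weight has derivative bounded by 2 + |H(f,x)|, and H is bounded on
   (0,b): near the ends by hypothesis (2), on compact subintervals by analyticity, since at a
   root of order m it is dominated by f f''/f'^2, which extends continuously there.  So w is
   L-Lipschitz in t on root-free intervals.  Where w >= eps the logarithmic derivative of f is
   at most 1/eps, so by Gronwall no root lies within t-distance w(t)/L of a point t.  Hence on
   the t-ball of radius w(t)/(2L) there is no root and w stays above w(t)/2, and this ball
   cannot reach ln b because w -> 0 there by (1a).  In the variable x this is amenability with
   C = 2L + 4. *)

From Stdlib Require Import Reals Lra Lia Classical.
From Coquelicot Require Import Coquelicot.
Open Scope R_scope.

(** * Roots and weights in the logarithmic chart *)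

Lemma continuity_pt_of_ex_derive (g : R -> R) (x : R) :
  ex_derive g x -> continuity_pt g x.
Proof.
  intros Hd. apply continuity_pt_filterlim.
  exact (ex_derive_continuous (K := R_AbsRing) (V := R_NormedModule) g x Hd).
Qed.

Lemma continuity_pt_of_is_derive (g : R -> R) (x l : R) :
  is_derive g x l -> continuity_pt g x.
Proof. intros Hd. apply continuity_pt_of_ex_derive. exists l. exact Hd. Qed.

Lemma continuity_pt_locally_bounded (g : R -> R) (z : R) :
  continuity_pt g z -> exists e M, 0 < e /\ forall x, Rabs (x - z) < e -> Rabs (g x) <= M.
Proof.
  intros Hc. destruct (Hc 1 Rlt_0_1) as [e [He Hclose]].
  exists e, (Rabs (g z) + 1). split; [exact He|]. intros x Hx.
  destruct (Req_dec x z) as [->|Hxz]; [lra|].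
  assert (Hgx : Rabs (g x - g z) < 1) by (apply Hclose; split; [split; [exact I|auto]|exact Hx]).
  pose proof (Rabs_triang_inv (g x) (g z)). lra.
Qed.

Lemma continuity_pt_nonzero_near (g : R -> R) (z : R) :
  continuity_pt g z -> g z <> 0 -> exists e, 0 < e /\ forall x, Rabs (x - z) < e -> g x <> 0.
Proof.
  intros Hc Hz. destruct (Hc (Rabs (g z)) (Rabs_pos_lt _ Hz)) as [e [He Hclose]].
  exists e. split; [exact He|]. intros x Hx Hgx.
  destruct (Req_dec x z) as [->|Hxz]; [contradiction|].
  assert (Hgz : Rabs (g x - g z) < Rabs (g z))
    by (apply Hclose; split; [split; [exact I|auto]|exact Hx]).
  rewrite Hgx, Rminus_0_l, Rabs_Ropp in Hgz. lra.
Qed.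

Lemma nearest_root_right (F : R -> R) (x a : R) :
  x < a -> F x <> 0 -> F a = 0 -> (forall s, x <= s <= a -> continuity_pt F s) ->
  exists z, x < z <= a /\ F z = 0 /\ forall s, x <= s < z -> F s <> 0.
Proof.
  intros Hxa Fx Fa Hc.
  set (S := fun s => x <= s <= a /\ forall t, x <= t <= s -> F t <> 0).
  assert (Sx : S x) by (split; [lra|]; intros t Ht; replace t with x by lra; exact Fx).
  assert (HS : bound S) by (exists a; intros s [Hs _]; lra).
  destruct (completeness S HS (ex_intro _ x Sx)) as [z [Hub Hlub]].
  assert (Hxz : x <= z) by (apply Hub, Sx).
  assert (Hza : z <= a) by (apply Hlub; intros s [Hs _]; lra).
  assert (Hbelow : forall t, x <= t < z -> F t <> 0).
  { intros t Ht Ft.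
    assert (Ht_ub : is_upper_bound S t).
    { intros s [Hs Hnz]. destruct (Rle_dec s t) as [|Hst]; [lra|].
      exfalso. apply (Hnz t); [lra|exact Ft]. }
    specialize (Hlub t Ht_ub). lra. }
  assert (Fz : F z = 0).
  { apply NNPP. intros Fz.
    destruct (continuity_pt_nonzero_near F z (Hc z (conj Hxz Hza)) Fz) as [e [He Hnear]].
    assert (Hza' : z < a) by (destruct Hza as [ | ->]; [lra|contradiction]).
    set (s := Rmin a (z + e / 2)).
    assert (Hs : z < s <= a) by (unfold s; split; [apply Rmin_glb_lt|apply Rmin_l]; lra).
    assert (Ss : S s).
    { split; [lra|]. intros t Ht. destruct (Rlt_dec t z); [apply Hbelow; lra|].
      assert (s <= z + e / 2) by apply Rmin_r.
      apply Hnear, Rabs_def1; lra. }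
    specialize (Hub s Ss). lra. }
  exists z. split; [|split; [exact Fz|exact Hbelow]].
  split; [|exact Hza]. destruct Hxz as [ | <-]; [lra|contradiction].
Qed.

Lemma sqr_exp_le_of_log_derivative (F dF : R -> R) (M a c : R) :
  a <= c ->
  (forall s, a <= s <= c -> is_derive F s (dF s) /\ Rabs (F s * dF s) <= M * F s ^ 2) ->
  F a ^ 2 * exp (- (2 * M * (c - a))) <= F c ^ 2.
Proof.
  intros Hac HF.
  set (h := fun s => F s ^ 2 * exp (2 * M * s)).
  set (dh := fun s => 2 * (F s * dF s + M * F s ^ 2) * exp (2 * M * s)).
  assert (Hh : forall s, a <= s <= c -> is_derive h s (dh s)).
  { intros s Hs. destruct (HF s Hs) as [Hd _]. unfold h, dh.
    auto_derive; [exists (dF s); exact Hd|].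
    replace (Derive (fun x : R => F x) s) with (dF s)
      by (symmetry; apply is_derive_unique, Hd).
    ring. }
  destruct (MVT_gen h a c dh) as [xi [Hxi Hmvt]].
  - intros s Hs. rewrite Rmin_left, Rmax_right in Hs by lra. apply Hh. lra.
  - intros s Hs. rewrite Rmin_left, Rmax_right in Hs by lra.
    apply (continuity_pt_of_is_derive _ _ _ (Hh s Hs)).
  - rewrite Rmin_left, Rmax_right in Hxi by lra.
    assert (Hdh : 0 <= dh xi).
    { destruct (HF xi Hxi) as [_ Hle]. unfold dh.
      apply Rmult_le_pos; [|apply Rlt_le, exp_pos].
      apply Rabs_le_between in Hle. lra. }
    assert (Hmono : h a <= h c) by nra.
    unfold h in Hmono.
    replace (- (2 * M * (c - a))) with (2 * M * a + - (2 * M * c)) by ring.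
    rewrite exp_plus, <- Rmult_assoc.
    apply Rmult_le_reg_r with (exp (2 * M * c)); [apply exp_pos|].
    rewrite Rmult_assoc, <- exp_plus, Rplus_opp_l, exp_0, Rmult_1_r. exact Hmono.
Qed.

Lemma nonzero_on_segment_right (F dF W : R -> R) (L tx ty : R) :
  0 <= L -> tx <= ty -> F tx <> 0 -> L * (ty - tx) < W tx ->
  (forall t, tx <= t <= ty -> is_derive F t (dF t)) ->
  (forall t, tx <= t <= ty -> F t <> 0 -> W t * Rabs (dF t) <= Rabs (F t)) ->
  (forall s, tx <= s <= ty -> (forall t, tx <= t <= s -> F t <> 0) ->
     W tx - L * (s - tx) <= W s) ->
  forall t, tx <= t <= ty -> F t <> 0.
Proof.
  intros HL Hxy Fx Hgap Hder Hweight Hlip t Ht Ft.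
  assert (Htx : tx < t) by (destruct (proj1 Ht) as [|<-]; [lra|contradiction]).
  destruct (nearest_root_right F tx t Htx Fx Ft) as [z [Hz [Fz Hnz]]].
  { intros s Hs. apply (continuity_pt_of_is_derive _ _ _ (Hder s ltac:(lra))). }
  set (eps := W tx - L * (ty - tx)).
  (* Before the first root the weight stays above [eps], so [F] has bounded logarithmic
     derivative there and cannot reach [0]. *)
  assert (Hlog : forall s, tx <= s <= z ->
            is_derive F s (dF s) /\ Rabs (F s * dF s) <= / eps * F s ^ 2).
  { intros s Hs. split; [apply Hder; lra|].
    destruct (Req_dec s z) as [->|Hsz].
    { rewrite Fz, Rmult_0_l, Rabs_R0. lra. }
    assert (Fs : F s <> 0) by (apply Hnz; lra).
    assert (Hws : eps <= W s).
    { assert (L * (s - tx) <= L * (ty - tx)) by (apply Rmult_le_compat_l; lra).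
      pose proof (Hlip s ltac:(lra) ltac:(intros r Hr; apply Hnz; lra)). unfold eps. lra. }
    assert (Heps : 0 < eps) by (unfold eps; lra).
    assert (HdF : Rabs (dF s) <= / eps * Rabs (F s)).
    { apply Rmult_le_reg_l with eps; [exact Heps|].
      rewrite <- Rmult_assoc, Rinv_r, Rmult_1_l by lra.
      pose proof (Hweight s ltac:(lra) Fs). pose proof (Rabs_pos (dF s)). nra. }
    rewrite Rabs_mult, <- (pow2_abs (F s)).
    pose proof (Rabs_pos (F s)). simpl. nra. }
  pose proof (sqr_exp_le_of_log_derivative F dF (/ eps) tx z ltac:(lra) Hlog) as Hgron.
  rewrite Fz in Hgron.
  assert (0 < F tx ^ 2 * exp (- (2 * / eps * (z - tx)))).
  { apply Rmult_lt_0_compat; [|apply exp_pos]. apply pow2_gt_0, Fx. }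
  simpl in Hgron. lra.
Qed.

Lemma is_derive_reflect (F : R -> R) (s l : R) :
  is_derive F (- s) l -> is_derive (fun t => F (- t)) s (- l).
Proof.
  intros Hd.
  pose proof (is_derive_comp F Ropp s l _ Hd (is_derive_opp _ s _ (is_derive_id s))) as Hc.
  eapply is_derive_ext; [intros t; reflexivity|].
  replace (- l) with (scal (opp 1) l); [exact Hc|].
  unfold scal, opp; simpl; unfold mult; simpl. ring.
Qed.

Lemma nonzero_on_segment_left (F dF W : R -> R) (L tx ty : R) :
  0 <= L -> ty <= tx -> F tx <> 0 -> L * (tx - ty) < W tx ->
  (forall t, ty <= t <= tx -> is_derive F t (dF t)) ->
  (forall t, ty <= t <= tx -> F t <> 0 -> W t * Rabs (dF t) <= Rabs (F t)) ->
  (forall s, ty <= s <= tx -> (forall t, s <= t <= tx -> F t <> 0) ->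
     W tx - L * (tx - s) <= W s) ->
  forall t, ty <= t <= tx -> F t <> 0.
Proof.
  intros HL Hyx Fx Hgap Hder Hweight Hlip t Ht.
  rewrite <- (Ropp_involutive t).
  apply (nonzero_on_segment_right (fun s => F (- s)) (fun s => - dF (- s)) (fun s => W (- s))
           L (- tx) (- ty)); rewrite ?Ropp_involutive; try lra.
  - intros s Hs. apply is_derive_reflect, Hder. lra.
  - intros s Hs Fs. rewrite Rabs_Ropp. apply Hweight; [lra|exact Fs].
  - intros s Hs Hnz. replace (s - - tx) with (tx - - s) by ring. apply Hlip; [lra|].
    intros r Hr. rewrite <- (Ropp_involutive r). apply Hnz. lra.
Qed.

Section LogChart.

(* The chart [t = ln x]: [F] stands for [f o exp], [dF] for its derivative, [W] for the weight. *)

Variables (tb L : R) (F dF W : R -> R).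

Hypothesis L_ge0 : 0 <= L.
Hypothesis F_derive : forall t, t < tb -> is_derive F t (dF t).
Hypothesis W_mul_dF_le : forall t, t < tb -> F t <> 0 -> W t * Rabs (dF t) <= Rabs (F t).
Hypothesis W_lipschitz : forall t1 t2, t1 <= t2 < tb ->
  (forall t, t1 <= t <= t2 -> F t <> 0) -> Rabs (W t2 - W t1) <= L * (t2 - t1).
Hypothesis W_vanishes_at_end : forall e, 0 < e ->
  exists t0, t0 < tb /\ forall t, t0 < t < tb -> F t <> 0 -> W t < e.

Lemma W_half_stable_right (tx ty : R) :
  tx <= ty < tb -> F tx <> 0 -> 2 * L * (ty - tx) < W tx -> F ty <> 0 /\ W tx / 2 < W ty.
Proof.
  intros Ht Fx Hgap.
  assert (Hnz : forall t, tx <= t <= ty -> F t <> 0).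
  { assert (Hgap' : L * (ty - tx) < W tx) by nra.
    apply (nonzero_on_segment_right F dF W L tx ty L_ge0 (proj1 Ht) Fx Hgap').
    - intros t Ht'. apply F_derive. lra.
    - intros t Ht'. apply W_mul_dF_le. lra.
    - intros s Hs Hnz. pose proof (W_lipschitz tx s ltac:(lra) Hnz) as Hlip.
      apply Rabs_le_between in Hlip. lra. }
  split; [apply Hnz; lra|].
  pose proof (W_lipschitz tx ty ltac:(lra) Hnz) as Hlip.
  apply Rabs_le_between in Hlip. lra.
Qed.

Lemma W_half_stable_left (tx ty : R) :
  ty <= tx < tb -> F tx <> 0 -> 2 * L * (tx - ty) < W tx -> F ty <> 0 /\ W tx / 2 < W ty.
Proof.
  intros Ht Fx Hgap.
  assert (Hnz : forall t, ty <= t <= tx -> F t <> 0).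
  { assert (Hgap' : L * (tx - ty) < W tx) by nra.
    apply (nonzero_on_segment_left F dF W L tx ty L_ge0 (proj1 Ht) Fx Hgap').
    - intros t Ht'. apply F_derive. lra.
    - intros t Ht'. apply W_mul_dF_le. lra.
    - intros s Hs Hnz. pose proof (W_lipschitz s tx ltac:(lra) Hnz) as Hlip.
      apply Rabs_le_between in Hlip. lra. }
  split; [apply Hnz; lra|].
  pose proof (W_lipschitz ty tx ltac:(lra) Hnz) as Hlip.
  apply Rabs_le_between in Hlip. lra.
Qed.

Lemma lt_end_of_W_gap (tx ty : R) :
  tx <= ty -> tx < tb -> F tx <> 0 -> 2 * L * (ty - tx) < W tx -> ty < tb.
Proof.
  intros Hxy Hx Fx Hgap. apply Rnot_le_lt. intros Hby.
  assert (HW : 0 < W tx / 2) by (pose proof (Rmult_le_pos (2 * L) (ty - tx)); lra).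
  destruct (W_vanishes_at_end _ HW) as [t0 [Ht0 Hsmall]].
  set (s := Rmax tx ((t0 + tb) / 2)).
  assert (Hs : tx <= s < tb /\ t0 < s).
  { unfold s. split; [split; [apply Rmax_l|apply Rmax_lub_lt; lra]|].
    eapply Rlt_le_trans; [|apply Rmax_r]. lra. }
  assert (2 * L * (s - tx) <= 2 * L * (ty - tx)) by (apply Rmult_le_compat_l; lra).
  destruct (W_half_stable_right tx s ltac:(lra) Fx ltac:(lra)) as [Fs HWs].
  pose proof (Hsmall s ltac:(lra) Fs). lra.
Qed.

Lemma W_half_stable (tx ty : R) :
  tx < tb -> F tx <> 0 -> 2 * L * Rabs (ty - tx) < W tx ->
  ty < tb /\ F ty <> 0 /\ W tx / 2 < W ty.
Proof.
  intros Hx Fx Hgap. destruct (Rle_dec tx ty) as [Hxy|Hyx].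
  - rewrite Rabs_right in Hgap by lra.
    assert (Hy : ty < tb) by exact (lt_end_of_W_gap tx ty Hxy Hx Fx Hgap).
    split; [exact Hy|]. apply W_half_stable_right; auto.
  - rewrite Rabs_left in Hgap by lra.
    split; [lra|]. apply W_half_stable_left; [lra|exact Fx|lra].
Qed.

End LogChart.

(** * Smoothness of analytic functions *)

Lemma CV_radius_ge_of_ex_pseries (c : nat -> R) (r : R) :
  0 < r -> (forall h, Rabs h < r -> ex_pseries c h) -> Rbar_le r (CV_radius c).
Proof.
  intros Hr Hc. pose proof (CV_radius_ge_0 c) as H0.
  destruct (CV_radius c) as [rho| |] eqn:Erho; simpl in *; auto.
  destruct (Rle_dec r rho) as [|Hlt]; auto. exfalso.
  set (h := (rho + r) / 2).
  assert (Hh : Rabs h < r) by (unfold h; rewrite Rabs_right; lra).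
  destruct (Hc h Hh) as [l Hl].
  apply (CV_disk_outside c h); [rewrite Erho; simpl; unfold h; rewrite Rabs_right; lra|].
  apply ex_series_lim_0. exists l. apply is_pseries_R, Hl.
Qed.

Lemma CV_radius_decr_n (c : nat -> R) (m : nat) : CV_radius (PS_decr_n c m) = CV_radius c.
Proof.
  induction m as [|m IHm].
  - apply CV_radius_ext. intros n. reflexivity.
  - rewrite <- IHm, <- (CV_radius_decr_1 (PS_decr_n c m)).
    apply CV_radius_ext. intros n. unfold PS_decr_n, PS_decr_1. f_equal. lia.
Qed.

Lemma locally_ball_R (y z r : R) : Rabs (y - z) < r -> locally y (fun u => Rabs (u - z) < r).
Proof.
  intros Hy. assert (Hd : 0 < r - Rabs (y - z)) by lra.
  exists (mkposreal _ Hd). intros u Hu. change (Rabs (u - y) < r - Rabs (y - z)) in Hu.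
  replace (u - z) with ((u - y) + (y - z)) by ring.
  eapply Rle_lt_trans; [apply Rabs_triang|]. lra.
Qed.

Lemma analytic_local_series (b : R) (f : R -> R) (z : R) :
  real_analytic_on 0 b f -> 0 < z < b ->
  exists r c, 0 < r /\ Rbar_le r (CV_radius c) /\
    forall x, Rabs (x - z) < r -> f x = PSeries c (x - z).
Proof.
  intros Han Hz. destruct (Han z Hz) as [r0 [Hr0 [c Hc]]].
  set (r := Rmin r0 (Rmin z (b - z)) / 2).
  assert (Hr : 0 < r).
  { assert (0 < Rmin r0 (Rmin z (b - z))) by (repeat apply Rmin_glb_lt; lra). unfold r. lra. }
  assert (Hrr0 : r < r0) by (unfold r; pose proof (Rmin_l r0 (Rmin z (b - z))); lra).
  assert (Hin : forall x, Rabs (x - z) < r -> 0 < x < b).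
  { intros x Hx. apply Rabs_def2 in Hx.
    pose proof (Rmin_r r0 (Rmin z (b - z))). pose proof (Rmin_l z (b - z)).
    pose proof (Rmin_r z (b - z)). unfold r in Hx. lra. }
  assert (Hser : forall x, Rabs (x - z) < r -> is_pseries c (x - z) (f x))
    by (intros x Hx; apply Hc; [apply Hin, Hx|lra]).
  exists r, c. split; [exact Hr|]. split.
  - apply CV_radius_ge_of_ex_pseries; [exact Hr|]. intros h Hh. exists (f (z + h)).
    assert (Hzh : Rabs (z + h - z) < r) by (replace (z + h - z) with h by ring; exact Hh).
    pose proof (Hser (z + h) Hzh) as Hs. replace (z + h - z) with h in Hs by ring. exact Hs.
  - intros x Hx. symmetry. apply is_pseries_unique, Hser, Hx.
Qed.

Definition infinitely_derivable_on (D : R -> Prop) (g : R -> R) : Prop :=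
  forall n y, D y -> ex_derive (Derive_n g n) y.

Lemma series_infinitely_derivable (g : R -> R) (c : nat -> R) (z r : R) :
  Rbar_le r (CV_radius c) -> (forall y, Rabs (y - z) < r -> g y = PSeries c (y - z)) ->
  infinitely_derivable_on (fun y => Rabs (y - z) < r) g.
Proof.
  intros Hrad Hg n y Hy.
  assert (Hin : forall u, Rabs (u - z) < r -> Rbar_lt (Rabs (u - z)) (CV_radius c))
    by (intros u Hu; eapply Rbar_lt_le_trans; [|exact Hrad]; exact Hu).
  assert (Hloc : locally y (fun u => PSeries (PS_derive_n n c) (u - z) = Derive_n g n u)).
  { apply (filter_imp (fun u => Rabs (u - z) < r)); [|apply locally_ball_R, Hy].
    intros u Hu. symmetry.
    rewrite (Derive_n_ext_loc g (fun v => PSeries c (v + - z))).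
    - rewrite Derive_n_comp_trans. apply Derive_n_PSeries, Hin, Hu.
    - apply (filter_imp (fun v => Rabs (v - z) < r)); [|apply locally_ball_R, Hu].
      intros v Hv. apply Hg, Hv. }
  apply (ex_derive_ext_loc _ _ y Hloc).
  apply (ex_derive_comp (PSeries (PS_derive_n n c)) (fun u => u - z)).
  - apply ex_derive_PSeries. rewrite CV_radius_derive_n. apply Hin, Hy.
  - auto_derive. exact I.
Qed.

Lemma analytic_infinitely_derivable (b : R) (f : R -> R) :
  real_analytic_on 0 b f -> infinitely_derivable_on (fun y => 0 < y < b) f.
Proof.
  intros Han n y Hy.
  destruct (analytic_local_series b f y Han Hy) as [r [c [Hr [Hrad Hser]]]].
  apply (series_infinitely_derivable f c y r Hrad Hser).
  rewrite Rminus_diag, Rabs_R0. exact Hr.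
Qed.

Lemma is_derive_Derive_n_on (D : R -> Prop) (g : R -> R) (n : nat) (y : R) :
  infinitely_derivable_on D g -> D y -> is_derive (Derive_n g n) y (Derive_n g (S n) y).
Proof. intros Hg Hy. apply Derive_correct, Hg, Hy. Qed.

Lemma continuity_pt_Derive_n_on (D : R -> Prop) (g : R -> R) (n : nat) (y : R) :
  infinitely_derivable_on D g -> D y -> continuity_pt (Derive_n g n) y.
Proof. intros Hg Hy. apply continuity_pt_of_ex_derive, Hg, Hy. Qed.

(** * Boundedness of H *)

Lemma Hf_root (f : R -> R) (x : R) : f x = 0 -> Hf f x = 0.
Proof. intros Fx. unfold Hf. rewrite Fx. unfold Rdiv. ring. Qed.

Lemma Rabs_sqr_mult_mult (x a q : R) : Rabs (x ^ 2 * a * q) = x ^ 2 * Rabs a * Rabs q.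
Proof. rewrite !Rabs_mult, <- RPow_abs, pow2_abs. reflexivity. Qed.

Lemma Rabs_Hf_le_nonroot (f : R -> R) (x : R) :
  f x <> 0 -> Rabs (Hf f x) <= x ^ 2 * Rabs (Derive_n f 2 x) / Rabs (f x).
Proof.
  intros Fx. unfold Hf.
  set (a := f x). set (p := Derive f x). set (q := Derive_n f 2 x).
  assert (Ha : 0 < Rabs a) by (apply Rabs_pos_lt, Fx).
  assert (Ha2 : a ^ 2 = Rabs a ^ 2) by (symmetry; apply pow2_abs).
  assert (Hden : a ^ 2 <= a ^ 2 + x ^ 2 * p ^ 2)
    by (pose proof (Rmult_le_pos _ _ (pow2_ge_0 x) (pow2_ge_0 p)); lra).
  assert (0 <= x ^ 2 * Rabs a * Rabs q)
    by (apply Rmult_le_pos; [apply Rmult_le_pos; [apply pow2_ge_0|]|]; apply Rabs_pos).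
  assert (Ha2pos : 0 < a ^ 2) by (rewrite Ha2; apply pow_lt, Ha).
  unfold Rdiv. rewrite Rabs_mult, Rabs_sqr_mult_mult, Rabs_inv.
  rewrite (Rabs_right (a ^ 2 + x ^ 2 * p ^ 2)) by lra.
  apply Rle_trans with (x ^ 2 * Rabs a * Rabs q * / a ^ 2).
  - apply Rmult_le_compat_l; [assumption|]. apply Rinv_le_contravar; [nra|exact Hden].
  - rewrite Ha2. right. field. lra.
Qed.

Lemma Rabs_Hf_le_root (f : R -> R) (x : R) :
  Derive f x <> 0 -> Rabs (Hf f x) <= Rabs (f x * Derive_n f 2 x / Derive f x ^ 2).
Proof.
  intros Fx. unfold Hf.
  set (a := f x). set (p := Derive f x). set (q := Derive_n f 2 x).
  destruct (Req_dec x 0) as [->|Hx].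
  { replace (0 ^ 2 * a * q / (a ^ 2 + 0 ^ 2 * p ^ 2)) with 0 by (simpl; unfold Rdiv; ring).
    rewrite Rabs_R0. apply Rabs_pos. }
  assert (Hp2 : 0 < p ^ 2) by (apply pow2_gt_0, Fx).
  assert (Hx2 : 0 < x ^ 2) by (apply pow2_gt_0, Hx).
  assert (Hxp : 0 < x ^ 2 * p ^ 2) by (apply Rmult_lt_0_compat; assumption).
  assert (Hden : x ^ 2 * p ^ 2 <= a ^ 2 + x ^ 2 * p ^ 2) by (pose proof (pow2_ge_0 a); lra).
  assert (0 <= x ^ 2 * Rabs a * Rabs q)
    by (apply Rmult_le_pos; [apply Rmult_le_pos; [lra|]|]; apply Rabs_pos).
  unfold Rdiv. rewrite Rabs_mult, Rabs_sqr_mult_mult, Rabs_inv.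
  rewrite (Rabs_right (a ^ 2 + x ^ 2 * p ^ 2)) by lra.
  rewrite !Rabs_mult, Rabs_inv, (Rabs_right (p ^ 2)) by nra.
  apply Rle_trans with (x ^ 2 * Rabs a * Rabs q * / (x ^ 2 * p ^ 2)).
  - apply Rmult_le_compat_l; [assumption|]. apply Rinv_le_contravar; assumption.
  - right. field. tauto.
Qed.

Lemma euler_factor (g G : R -> R) (z x g1 G1 : R) (m : nat) :
  locally x (fun y => g y = (y - z) ^ m * G y) -> is_derive g x g1 -> is_derive G x G1 ->
  (x - z) * g1 = (x - z) ^ m * (INR m * G x + (x - z) * G1).
Proof.
  intros Hloc Hg HG.
  assert (Hprod : is_derive (fun y => (y - z) ^ m * G y) x
                    (INR m * (x - z) ^ pred m * G x + (x - z) ^ m * G1)).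
  { auto_derive; [exists G1; exact HG|].
    replace (Derive (fun y : R => G y) x) with G1 by (symmetry; apply is_derive_unique, HG).
    unfold Rminus. ring. }
  apply (is_derive_ext_loc _ g) in Hprod.
  2: { apply (filter_imp (fun y => g y = (y - z) ^ m * G y)); [|exact Hloc].
       intros y Hy. symmetry. exact Hy. }
  rewrite <- (is_derive_unique _ _ _ Hg), (is_derive_unique _ _ _ Hprod).
  destruct m as [|m]; simpl; ring.
Qed.

Lemma euler_derivatives (f G : R -> R) (z r : R) (m : nat) (y : R) :
  (forall u, Rabs (u - z) < r -> f u = (u - z) ^ m * G u) ->
  infinitely_derivable_on (fun u => Rabs (u - z) < r) f ->
  infinitely_derivable_on (fun u => Rabs (u - z) < r) G ->
  Rabs (y - z) < r ->
  (y - z) * Derive f y = (y - z) ^ m * (INR m * G y + (y - z) * Derive G y) /\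
  (y - z) ^ 2 * Derive_n f 2 y = (y - z) ^ m *
    (INR m * (INR m - 1) * G y + 2 * INR m * (y - z) * Derive G y
     + (y - z) ^ 2 * Derive_n G 2 y).
Proof.
  intros Hfac Hsf HG Hy.
  set (B := fun u => INR m * G u + (u - z) * Derive G u).
  assert (HB : forall u, Rabs (u - z) < r -> (u - z) * Derive f u = (u - z) ^ m * B u).
  { intros u Hu. apply (euler_factor f G z u (Derive f u) (Derive G u) m).
    - apply (filter_imp (fun v => Rabs (v - z) < r)); [exact Hfac|apply locally_ball_R, Hu].
    - exact (is_derive_Derive_n_on _ f 0 u Hsf Hu).
    - apply (is_derive_Derive_n_on _ G 0 u HG Hu). }
  split; [apply HB, Hy|].
  assert (HdB : is_derive B y ((INR m + 1) * Derive G y + (y - z) * Derive_n G 2 y)).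
  { pose proof (is_derive_Derive_n_on _ G 0 y HG Hy) as D1.
    pose proof (is_derive_Derive_n_on _ G 1 y HG Hy) as D2.
    unfold B. auto_derive.
    { split; [exact (ex_intro _ _ D1)|split; [exact (ex_intro _ _ D2)|exact I]]. }
    replace (Derive (fun u : R => G u) y) with (Derive G y)
      by (symmetry; apply is_derive_unique, D1).
    replace (Derive (fun u : R => Derive G u) y) with (Derive_n G 2 y)
      by (symmetry; apply is_derive_unique, D2).
    unfold Rminus. ring. }
  assert (Hdg : is_derive (fun u => (u - z) * Derive f u) y
                  (Derive f y + (y - z) * Derive_n f 2 y)).
  { pose proof (is_derive_Derive_n_on _ f 1 y Hsf Hy) as D2.
    auto_derive; [exists (Derive_n f 2 y); exact D2|].
    replace (Derive (fun u : R => Derive f u) y) with (Derive_n f 2 y)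
      by (symmetry; apply is_derive_unique, D2).
    unfold Rminus. ring. }
  pose proof (euler_factor _ B z y _ _ m
                (filter_imp _ _ (fun u Hu => HB u Hu) (locally_ball_R y z r Hy)) Hdg HdB) as E.
  replace ((y - z) ^ 2 * Derive_n f 2 y)
    with ((y - z) * (Derive f y + (y - z) * Derive_n f 2 y) - (y - z) * Derive f y) by ring.
  rewrite E, (HB y Hy). unfold B. ring.
Qed.

Lemma Hf_locally_bounded_nonroot (D : R -> Prop) (f : R -> R) (z : R) :
  infinitely_derivable_on D f -> D z -> f z <> 0 ->
  exists e M, 0 < e /\ forall x, Rabs (x - z) < e -> Rabs (Hf f x) <= M.
Proof.
  intros Hsmooth Hz Fz.
  pose proof (continuity_pt_Derive_n_on D f 0 z Hsmooth Hz) as Hc0.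
  pose proof (continuity_pt_Derive_n_on D f 2 z Hsmooth Hz) as Hc2.
  destruct (continuity_pt_nonzero_near f z Hc0 Fz) as [e1 [He1 Hnz]].
  set (Q := fun x => x ^ 2 * Derive_n f 2 x / f x).
  assert (HQ : continuity_pt Q z).
  { apply continuity_pt_div; [apply continuity_pt_mult; [|exact Hc2]|exact Hc0|exact Fz].
    apply continuity_pt_of_ex_derive. auto_derive. exact I. }
  destruct (continuity_pt_locally_bounded Q z HQ) as [e2 [M [He2 HM]]].
  exists (Rmin e1 e2), M. split; [apply Rmin_glb_lt; assumption|].
  intros x Hx. pose proof (Rmin_l e1 e2). pose proof (Rmin_r e1 e2).
  eapply Rle_trans; [apply Rabs_Hf_le_nonroot, Hnz; lra|].
  apply Rle_trans with (Rabs (Q x)); [|apply HM; lra].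
  unfold Q, Rdiv. rewrite !Rabs_mult, Rabs_inv, <- RPow_abs, pow2_abs. lra.
Qed.

Lemma factored_ratio (h u G B A p q : R) :
  h <> 0 -> u <> 0 -> B <> 0 -> h * p = u * B -> h ^ 2 * q = u * A ->
  u * G * q / p ^ 2 = G * A / B ^ 2.
Proof.
  intros Hh Hu HB Hp Hq.
  replace p with (u * B / h) by (rewrite <- Hp; field; exact Hh).
  replace q with (u * A / h ^ 2) by (rewrite <- Hq; field; exact Hh).
  field. repeat split; assumption.
Qed.

Lemma Hf_locally_bounded_root (f G : R -> R) (z r : R) (m : nat) :
  0 < r -> (0 < m)%nat -> G z <> 0 ->
  (forall u, Rabs (u - z) < r -> f u = (u - z) ^ m * G u) ->
  infinitely_derivable_on (fun u => Rabs (u - z) < r) f ->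
  infinitely_derivable_on (fun u => Rabs (u - z) < r) G ->
  exists e M, 0 < e /\ forall x, Rabs (x - z) < e -> Rabs (Hf f x) <= M.
Proof.
  intros Hr Hm Gz Hfac Hsf HG.
  assert (Hz : Rabs (z - z) < r) by (rewrite Rminus_diag, Rabs_R0; exact Hr).
  set (B := fun u => INR m * G u + (u - z) * Derive G u).
  set (A := fun u => INR m * (INR m - 1) * G u + 2 * INR m * (u - z) * Derive G u
                     + (u - z) ^ 2 * Derive_n G 2 u).
  (* [f f'' / f'^2 = G A / B^2] near [z], bounded because [B z = m G z <> 0]. *)
  set (Q := fun u => G u * A u / B u ^ 2).
  assert (Bz : B z <> 0).
  { unfold B. rewrite Rminus_diag, Rmult_0_l, Rplus_0_r.
    apply Rmult_integral_contrapositive. split; [apply not_0_INR; lia|exact Gz]. }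
  assert (HG0 : ex_derive G z) by exact (HG 0%nat z Hz).
  assert (HG1 : ex_derive (Derive G) z) by exact (HG 1%nat z Hz).
  assert (HG2 : ex_derive (Derive_n G 2) z) by exact (HG 2%nat z Hz).
  assert (HB : continuity_pt B z)
    by (apply continuity_pt_of_ex_derive; unfold B; auto_derive; tauto).
  assert (HQ : continuity_pt Q z).
  { apply continuity_pt_of_ex_derive; unfold Q, A, B; auto_derive.
    repeat split; try assumption.
    rewrite Rmult_1_r. apply Rmult_integral_contrapositive. split; exact Bz. }
  destruct (continuity_pt_nonzero_near B z HB Bz) as [e1 [He1 HBnz]].
  destruct (continuity_pt_locally_bounded Q z HQ) as [e2 [M [He2 HM]]].
  exists (Rmin r (Rmin e1 e2)), M. split; [repeat apply Rmin_glb_lt; assumption|].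
  intros x Hx.
  pose proof (Rmin_l r (Rmin e1 e2)). pose proof (Rmin_r r (Rmin e1 e2)).
  pose proof (Rmin_l e1 e2). pose proof (Rmin_r e1 e2).
  assert (HQx : Rabs (Q x) <= M) by (apply HM; lra).
  destruct (Req_dec x z) as [->|Hxz].
  { rewrite Hf_root, Rabs_R0; [pose proof (Rabs_pos (Q z)); lra|].
    rewrite (Hfac z Hz), Rminus_diag, pow_i by exact Hm. ring. }
  assert (Hh : x - z <> 0) by lra.
  assert (Hu : (x - z) ^ m <> 0) by (apply pow_nonzero, Hh).
  assert (HBx : B x <> 0) by (apply HBnz; lra).
  destruct (euler_derivatives f G z r m x Hfac Hsf HG ltac:(lra)) as [E1 E2].
  fold (B x) in E1. fold (A x) in E2.
  assert (Hf1 : Derive f x <> 0).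
  { intros Hf1. rewrite Hf1, Rmult_0_r in E1. symmetry in E1.
    apply (Rmult_integral_contrapositive _ _ (conj Hu HBx) E1). }
  eapply Rle_trans; [apply Rabs_Hf_le_root, Hf1|].
  rewrite (Hfac x ltac:(lra)), (factored_ratio (x - z) _ _ (B x) (A x)); assumption.
Qed.

Lemma least_nonzero_index (c : nat -> R) (n : nat) :
  c n <> 0 -> exists m, c m <> 0 /\ forall k, (k < m)%nat -> c k = 0.
Proof.
  induction n as [n IH] using (well_founded_induction Wf_nat.lt_wf). intros Hn.
  destruct (classic (exists k, (k < n)%nat /\ c k <> 0)) as [[k [Hk Hck]]|Hnone].
  - exact (IH k Hk Hck).
  - exists n. split; [exact Hn|]. intros k Hk. apply NNPP. intros Hck. apply Hnone. eauto.
Qed.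

Lemma Hf_locally_bounded (b : R) (f : R -> R) (z : R) :
  real_analytic_on 0 b f -> 0 < z < b ->
  exists e M, 0 < e /\ forall x, Rabs (x - z) < e -> Rabs (Hf f x) <= M.
Proof.
  intros Han Hz.
  destruct (Req_dec (f z) 0) as [Fz|Fz].
  2: { exact (Hf_locally_bounded_nonroot _ f z (analytic_infinitely_derivable b f Han) Hz Fz). }
  destruct (analytic_local_series b f z Han Hz) as [r [c [Hr [Hrad Hser]]]].
  destruct (classic (forall n, c n = 0)) as [Hzero|Hnz].
  { exists r, 0. split; [exact Hr|]. intros x Hx.
    rewrite Hf_root, Rabs_R0; [lra|].
    rewrite (Hser x Hx), (PSeries_ext _ (fun _ => 0) _ Hzero). apply PSeries_const_0. }
  apply not_all_ex_not in Hnz. destruct Hnz as [n Hn].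
  destruct (least_nonzero_index c n Hn) as [m [Hm Hbelow]].
  assert (Hm0 : (0 < m)%nat).
  { destruct m as [|m]; [|lia]. exfalso. apply Hm.
    assert (E : f z = PSeries c (z - z)) by (apply Hser; rewrite Rminus_diag, Rabs_R0; exact Hr).
    rewrite Rminus_diag, PSeries_0 in E. rewrite <- E. exact Fz. }
  set (G := fun y => PSeries (PS_decr_n c m) (y - z)).
  apply (Hf_locally_bounded_root f G z r m Hr Hm0).
  - unfold G. rewrite Rminus_diag, PSeries_0. unfold PS_decr_n. rewrite Nat.add_0_r. exact Hm.
  - intros u Hu. rewrite (Hser u Hu). apply PSeries_decr_n_aux, Hbelow.
  - exact (series_infinitely_derivable f c z r Hrad Hser).
  - apply (series_infinitely_derivable G (PS_decr_n c m) z r); [|reflexivity].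
    rewrite CV_radius_decr_n. exact Hrad.
Qed.

Lemma bounded_on_segment_of_locally_bounded (g : R -> R) (a c : R) :
  a <= c ->
  (forall z, a <= z <= c -> exists e M, 0 < e /\ forall x, Rabs (x - z) < e -> Rabs (g x) <= M) ->
  exists M, forall x, a <= x <= c -> Rabs (g x) <= M.
Proof.
  intros Hac Hloc.
  set (S := fun s => a <= s <= c /\ exists M, forall x, a <= x <= s -> Rabs (g x) <= M).
  assert (Sa : S a).
  { split; [lra|]. destruct (Hloc a ltac:(lra)) as [e [M [He HM]]].
    exists M. intros x Hx. apply HM. replace (x - a) with 0 by lra. rewrite Rabs_R0. exact He. }
  assert (HS : bound S) by (exists c; intros s [Hs _]; lra).
  destruct (completeness S HS (ex_intro _ a Sa)) as [s [Hub Hlub]].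
  assert (Has : a <= s) by (apply Hub, Sa).
  assert (Hsc : s <= c) by (apply Hlub; intros t [Ht _]; lra).
  destruct (Hloc s (conj Has Hsc)) as [e [M0 [He HM0]]].
  assert (Ht : exists t, S t /\ s - e < t).
  { apply NNPP. intros Hnone.
    assert (Hb : is_upper_bound S (s - e)).
    { intros t St. apply Rnot_lt_le. intros Hlt. apply Hnone. exists t. split; assumption. }
    specialize (Hlub _ Hb). lra. }
  destruct Ht as [t [[Ht [M HM]] Hts]].
  (* The bound on [a, t] and the local bound around [s] together cover [a, s + e/2]. *)
  set (s' := Rmin c (s + e / 2)).
  assert (Ss' : S s').
  { split; [unfold s'; split; [apply Rmin_glb|apply Rmin_l]; lra|].
    exists (Rmax M M0). intros x Hx. destruct (Rle_dec x t).
    - apply Rle_trans with M; [apply HM; lra|apply Rmax_l].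
    - apply Rle_trans with M0; [|apply Rmax_r]. apply HM0.
      assert (s' <= s + e / 2) by apply Rmin_r.
      assert (t <= s) by (apply Hub; split; [|exists M]; assumption).
      apply Rabs_def1; lra. }
  assert (Hs's : s' <= s) by (apply Hub, Ss').
  assert (Hsc' : s = c).
  { unfold s' in Hs's. destruct (Rle_dec c (s + e / 2)).
    - rewrite Rmin_left in Hs's; lra.
    - rewrite Rmin_right in Hs's; lra. }
  destruct Ss' as [_ [M1 HM1]].
  exists M1. intros x Hx. apply HM1. unfold s'. rewrite Rmin_left; lra.
Qed.

Lemma Hf_bounded (b : R) (f : R -> R) :
  real_analytic_on 0 b f ->
  (exists d0 M0, 0 < d0 /\ forall x, 0 < x < b -> x < d0 -> Rabs (Hf f x) <= M0) ->
  (exists d1 M1, 0 < d1 /\ forall x, 0 < x < b -> b - d1 < x -> Rabs (Hf f x) <= M1) ->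
  exists K, 0 <= K /\ forall x, 0 < x < b -> Rabs (Hf f x) <= K.
Proof.
  intros Han [d0 [M0 [Hd0 HM0]]] [d1 [M1 [Hd1 HM1]]].
  destruct (Rle_dec d0 (b - d1)) as [Hle|Hgt].
  - destruct (bounded_on_segment_of_locally_bounded (Hf f) d0 (b - d1) Hle) as [M HM].
    { intros z Hz. apply (Hf_locally_bounded b f z Han). lra. }
    exists (Rmax 0 (Rmax M (Rmax M0 M1))). split; [apply Rmax_l|]. intros x Hx.
    pose proof (Rmax_r 0 (Rmax M (Rmax M0 M1))). pose proof (Rmax_l M (Rmax M0 M1)).
    pose proof (Rmax_r M (Rmax M0 M1)). pose proof (Rmax_l M0 M1). pose proof (Rmax_r M0 M1).
    destruct (Rlt_dec x d0); [pose proof (HM0 x Hx r); lra|].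
    destruct (Rlt_dec (b - d1) x); [pose proof (HM1 x Hx r); lra|].
    pose proof (HM x ltac:(lra)). lra.
  - exists (Rmax 0 (Rmax M0 M1)). split; [apply Rmax_l|]. intros x Hx.
    pose proof (Rmax_r 0 (Rmax M0 M1)). pose proof (Rmax_l M0 M1). pose proof (Rmax_r M0 M1).
    destruct (Rlt_dec x d0); [pose proof (HM0 x Hx r); lra|].
    pose proof (HM1 x Hx ltac:(lra)). lra.
Qed.

(** * The weight *)

Definition elasticity (f : R -> R) (x : R) : R := x * Derive f x / f x.

Definition weight (f : R -> R) (x : R) : R := / sqrt (1 + elasticity f x ^ 2).

Lemma sqrt_1_plus_sqr_bounds (k : R) :
  1 <= sqrt (1 + k ^ 2) /\ Rabs k <= sqrt (1 + k ^ 2) /\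
  sqrt (1 + k ^ 2) <= 1 + Rabs k /\ 1 + Rabs k <= 2 * sqrt (1 + k ^ 2).
Proof.
  set (s := sqrt (1 + k ^ 2)).
  assert (Hk2 : Rabs k * Rabs k = k ^ 2) by (rewrite <- Rabs_mult, Rabs_right; [ring|nra]).
  assert (Hs2 : s * s = 1 + k ^ 2) by (apply sqrt_sqrt; nra).
  assert (Hs0 : 0 <= s) by apply sqrt_pos.
  pose proof (Rabs_pos k).
  assert (H1 : 1 <= s) by nra.
  assert (Hk : Rabs k <= s) by nra.
  repeat split; try assumption; nra.
Qed.

Lemma weight_bounds (f : R -> R) (x : R) :
  let k := Rabs (elasticity f x) in
  0 < weight f x /\ k * weight f x <= 1 /\
  / (1 + k) <= weight f x /\ weight f x <= 2 / (1 + k).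
Proof.
  intros k. unfold weight. fold (Rabs (elasticity f x)) in k |- *.
  destruct (sqrt_1_plus_sqr_bounds (elasticity f x)) as [H1 [H2 [H3 H4]]].
  set (s := sqrt (1 + elasticity f x ^ 2)) in *. fold k in H2, H3, H4.
  pose proof (Rabs_pos (elasticity f x)). fold k in H.
  repeat split.
  - apply Rinv_0_lt_compat. lra.
  - apply Rmult_le_reg_r with s; [lra|]. rewrite Rmult_assoc, Rinv_l; lra.
  - apply Rinv_le_contravar; lra.
  - unfold Rdiv. apply Rmult_le_reg_r with (s * (1 + k)); [nra|].
    replace (/ s * (s * (1 + k))) with (1 + k) by (field; lra).
    replace (2 * / (1 + k) * (s * (1 + k))) with (2 * s) by (field; lra). lra.
Qed.

Lemma kappa_elasticity (f : R -> R) (x : R) :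
  x <> 0 -> f x <> 0 -> kappa f x = Finite (Rabs (elasticity f x)).
Proof.
  intros Hx Fx. unfold kappa, elasticity.
  destruct (Req_EM_T x 0) as [|_]; [contradiction|].
  destruct (Req_EM_T (f x) 0) as [|_]; [contradiction|].
  unfold Rdiv. rewrite !Rabs_mult, Rabs_inv. reflexivity.
Qed.

Lemma mu_le_weight (f : R -> R) (x : R) :
  x <> 0 -> f x <> 0 -> Rbar_le (mu f x) (Finite (2 / weight f x)).
Proof.
  intros Hx Fx. unfold mu. rewrite kappa_elasticity by assumption. simpl.
  destruct (weight_bounds f x) as [Hw [_ [_ Hle]]].
  set (k := Rabs (elasticity f x)) in *.
  assert (0 <= k) by apply Rabs_pos.
  apply Rmult_le_reg_r with (weight f x); [exact Hw|].
  unfold Rdiv. rewrite Rmult_assoc, Rinv_l by lra.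
  apply Rmult_le_reg_r with (/ (1 + k)); [apply Rinv_0_lt_compat; lra|].
  replace ((1 + k) * weight f x * / (1 + k)) with (weight f x) by (field; lra). lra.
Qed.

Lemma is_derive_elasticity_exp (f : R -> R) (t : R) :
  f (exp t) <> 0 -> is_derive f (exp t) (Derive f (exp t)) ->
  is_derive (Derive f) (exp t) (Derive_n f 2 (exp t)) ->
  let k := elasticity f (exp t) in
  is_derive (fun s => elasticity f (exp s)) t (k - k ^ 2 + (1 + k ^ 2) * Hf f (exp t)).
Proof.
  intros Fx D1 D2 k. unfold k, elasticity, Hf.
  auto_derive.
  { repeat split; [exact (ex_intro _ _ D2)|exact (ex_intro _ _ D1)|exact Fx]. }
  change (Derive (fun x : R => Derive f x) (exp t)) with (Derive_n f 2 (exp t)).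
  change (Derive (fun x : R => f x) (exp t)) with (Derive f (exp t)).
  set (x := exp t). set (a := f x). set (p := Derive f x). set (q := Derive_n f 2 x).
  assert (Ha2 : 0 < a ^ 2) by (apply pow2_gt_0, Fx).
  assert (0 <= x ^ 2 * p ^ 2) by (apply Rmult_le_pos; apply pow2_ge_0).
  field. split; [lra|exact Fx].
Qed.

Lemma is_derive_inv_sqrt_1_plus_sqr (k : R) :
  is_derive (fun u => / sqrt (1 + u ^ 2)) k (- k / ((1 + k ^ 2) * sqrt (1 + k ^ 2))).
Proof.
  destruct (sqrt_1_plus_sqr_bounds k) as [Hs _].
  assert (Hs2 : sqrt (1 + k ^ 2) * sqrt (1 + k ^ 2) = 1 + k ^ 2) by (apply sqrt_sqrt; nra).
  auto_derive; replace (1 + k * (k * 1)) with (1 + k ^ 2) by ring.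
  - repeat split; [nra|lra].
  - rewrite Hs2. field. split; [lra|nra].
Qed.

Lemma weight_derivative_bound (k H : R) :
  Rabs (- k / ((1 + k ^ 2) * sqrt (1 + k ^ 2)) * (k - k ^ 2 + (1 + k ^ 2) * H))
  <= 2 + Rabs H.
Proof.
  destruct (sqrt_1_plus_sqr_bounds k) as [Hs1 [Hks _]].
  set (s := sqrt (1 + k ^ 2)) in *.
  assert (Hs2 : s * s = 1 + k ^ 2) by (apply sqrt_sqrt; nra).
  pose proof (Rabs_pos k) as Hk0. pose proof (Rabs_pos H) as HH0.
  assert (Hk2 : Rabs k * Rabs k = k ^ 2) by (rewrite <- Rabs_mult, Rabs_right; [ring|nra]).
  (* As [s >= max 1 |k|], the first term is at most [(s^2 + s^3) / s^3 <= 2]. *)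
  replace (- k / ((1 + k ^ 2) * s) * (k - k ^ 2 + (1 + k ^ 2) * H))
    with (- (k * (k - k ^ 2)) / (s * s * s) + - (k / s) * H) by (rewrite <- Hs2; field; lra).
  eapply Rle_trans; [apply Rabs_triang|]. apply Rplus_le_compat.
  - unfold Rdiv. rewrite Rabs_mult, Rabs_Ropp, Rabs_inv, (Rabs_right (s * s * s)) by nra.
    apply Rmult_le_reg_r with (s * s * s); [nra|].
    rewrite Rmult_assoc, Rinv_l, Rmult_1_r by nra.
    rewrite Rabs_mult. eapply Rle_trans; [apply Rmult_le_compat_l; [exact Hk0|apply Rabs_triang]|].
    rewrite Rabs_Ropp, (Rabs_right (k ^ 2)), <- Hk2 by nra.
    assert (Rabs k * Rabs k <= s * s) by nra.
    assert (Rabs k * (Rabs k * Rabs k) <= s * (s * s)) by nra.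
    nra.
  - rewrite Rabs_mult, Rabs_Ropp. unfold Rdiv. rewrite Rabs_mult, Rabs_inv, (Rabs_right s) by lra.
    assert (Rabs k * / s <= 1).
    { apply Rmult_le_reg_r with s; [lra|]. rewrite Rmult_assoc, Rinv_l; lra. }
    assert (0 <= Rabs k * / s)
      by (apply Rmult_le_pos; [exact Hk0|apply Rlt_le, Rinv_0_lt_compat; lra]).
    nra.
Qed.

Lemma is_derive_weight_exp (f : R -> R) (t : R) :
  f (exp t) <> 0 -> is_derive f (exp t) (Derive f (exp t)) ->
  is_derive (Derive f) (exp t) (Derive_n f 2 (exp t)) ->
  exists d, is_derive (fun s => weight f (exp s)) t d /\ Rabs d <= 2 + Rabs (Hf f (exp t)).
Proof.
  intros Fx D1 D2.
  pose proof (is_derive_elasticity_exp f t Fx D1 D2) as Dk. cbv zeta in Dk.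
  pose proof (is_derive_comp (fun u => / sqrt (1 + u ^ 2)) _ t _ _
                (is_derive_inv_sqrt_1_plus_sqr (elasticity f (exp t))) Dk) as Dw.
  eexists. split; [exact Dw|].
  unfold scal; simpl; unfold mult; simpl. rewrite Rmult_comm. apply weight_derivative_bound.
Qed.

Lemma weight_exp_lipschitz (b : R) (f : R -> R) (K t1 t2 : R) :
  infinitely_derivable_on (fun x => 0 < x < b) f ->
  (forall x, 0 < x < b -> Rabs (Hf f x) <= K) ->
  t1 <= t2 -> (forall t, t1 <= t <= t2 -> exp t < b /\ f (exp t) <> 0) ->
  Rabs (weight f (exp t2) - weight f (exp t1)) <= (2 + K) * (t2 - t1).
Proof.
  intros Hsf HK H12 Ht.
  set (W := fun s => weight f (exp s)).
  assert (HW : forall t, t1 <= t <= t2 -> is_derive W t (Derive W t) /\ Rabs (Derive W t) <= 2 + K).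
  { intros t Htt. destruct (Ht t Htt) as [Hb Fx].
    assert (Hx : 0 < exp t < b) by (split; [apply exp_pos|exact Hb]).
    destruct (is_derive_weight_exp f t Fx (is_derive_Derive_n_on _ f 0 _ Hsf Hx)
                (is_derive_Derive_n_on _ f 1 _ Hsf Hx)) as [d [Hd Hbd]].
    rewrite (is_derive_unique W t d Hd). split; [exact Hd|].
    pose proof (HK _ Hx). lra. }
  destruct (MVT_gen W t1 t2 (Derive W)) as [c [Hc Hmvt]].
  - intros t Htt. rewrite Rmin_left, Rmax_right in Htt by lra. apply HW. lra.
  - intros t Htt. rewrite Rmin_left, Rmax_right in Htt by lra.
    apply (continuity_pt_of_is_derive _ _ _ (proj1 (HW t Htt))).
  - rewrite Rmin_left, Rmax_right in Hc by lra.
    change (Rabs (W t2 - W t1) <= (2 + K) * (t2 - t1)).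
    rewrite Hmvt, Rabs_mult, (Rabs_right (t2 - t1)) by lra.
    apply Rmult_le_compat_r; [lra|]. apply HW, Hc.
Qed.

Lemma exp_lt_of_lt_ln (t b : R) : 0 < b -> t < ln b -> exp t < b.
Proof. intros Hb Ht. rewrite <- (exp_ln b Hb). apply exp_increasing, Ht. Qed.

Lemma reldist_lt (x y d : R) :
  0 < x -> Rbar_lt (reldist y x) (Finite d) -> 0 < y /\ Rabs (ln y - ln x) < d.
Proof.
  intros Hx Hd. unfold reldist in Hd.
  destruct (Req_EM_T y 0) as [->|Hy0].
  { destruct (Req_EM_T x 0); [lra|contradiction]. }
  destruct (Rlt_dec 0 (y * x)) as [Hyx|]; [|contradiction].
  assert (Hy : 0 < y) by nra.
  split; [exact Hy|]. simpl in Hd.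
  rewrite ln_div in Hd by assumption.
  rewrite Rabs_minus_sym. exact Hd.
Qed.

Lemma weight_exp_vanishes_at_end (b : R) (f : R -> R) :
  0 < b ->
  (forall M, exists delta, 0 < delta /\
     forall x, b - delta < x < b -> Rbar_le (Finite M) (kappa f x)) ->
  forall e, 0 < e -> exists t0, t0 < ln b /\
    forall t, t0 < t < ln b -> f (exp t) <> 0 -> weight f (exp t) < e.
Proof.
  intros Hb Hkappa e He.
  destruct (Hkappa (2 / e)) as [delta [Hdelta Hclose]].
  set (x0 := Rmax (b - delta) (b / 2)).
  assert (Hx0 : b - delta <= x0 /\ 0 < x0 < b).
  { assert (b / 2 <= x0) by apply Rmax_r. split; [apply Rmax_l|].
    split; [lra|]. apply Rmax_lub_lt; lra. }
  exists (ln x0). split; [apply ln_increasing; lra|].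
  intros t Ht Fx.
  assert (Hxb : exp t < b) by (apply exp_lt_of_lt_ln; [exact Hb|apply Ht]).
  assert (Hxx0 : x0 < exp t) by (rewrite <- (exp_ln x0) by lra; apply exp_increasing, Ht).
  pose proof (Hclose (exp t) ltac:(lra)) as Hk.
  rewrite kappa_elasticity in Hk by (try apply Rgt_not_eq, exp_pos; exact Fx). simpl in Hk.
  destruct (weight_bounds f (exp t)) as [_ [_ [_ Hw]]].
  set (k := Rabs (elasticity f (exp t))) in *.
  assert (Hk0 : 0 <= k) by apply Rabs_pos.
  assert (Hek : 2 <= e * k).
  { apply Rmult_le_reg_l with (/ e); [apply Rinv_0_lt_compat, He|].
    rewrite <- Rmult_assoc, Rinv_l, Rmult_1_l by lra. rewrite Rmult_comm. exact Hk. }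
  eapply Rle_lt_trans; [exact Hw|].
  apply Rmult_lt_reg_r with (1 + k); [lra|].
  unfold Rdiv. rewrite Rmult_assoc, Rinv_l by lra. lra.
Qed.

Lemma weight_half_stable (b : R) (f : R -> R) (K : R) :
  0 < b -> real_analytic_on 0 b f -> 0 <= K ->
  (forall x, 0 < x < b -> Rabs (Hf f x) <= K) ->
  (forall M, exists delta, 0 < delta /\
     forall x, b - delta < x < b -> Rbar_le (Finite M) (kappa f x)) ->
  forall x y, 0 < x < b -> f x <> 0 -> 0 < y ->
  2 * (2 + K) * Rabs (ln y - ln x) < weight f x ->
  y < b /\ f y <> 0 /\ weight f x / 2 < weight f y.
Proof.
  intros Hb Han HK0 HK Hkappa x y Hx Fx Hy Hgap.
  pose proof (analytic_infinitely_derivable b f Han) as Hsf.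
  assert (Hin : forall t, t < ln b -> 0 < exp t < b)
    by (intros t Ht; split; [apply exp_pos|apply exp_lt_of_lt_ln; assumption]).
  assert (HF : forall t, t < ln b -> is_derive (fun s => f (exp s)) t (exp t * Derive f (exp t))).
  { intros t Ht. apply (is_derive_comp f exp t), is_derive_exp.
    exact (is_derive_Derive_n_on _ f 0 _ Hsf (Hin t Ht)). }
  assert (HW : forall t, t < ln b -> f (exp t) <> 0 ->
            weight f (exp t) * Rabs (exp t * Derive f (exp t)) <= Rabs (f (exp t))).
  { intros t _ Ft. destruct (weight_bounds f (exp t)) as [_ [Hkw _]].
    replace (exp t * Derive f (exp t)) with (elasticity f (exp t) * f (exp t))
      by (unfold elasticity; field; exact Ft).
    rewrite Rabs_mult, <- Rmult_assoc, (Rmult_comm (weight f (exp t))).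
    pose proof (Rabs_pos (f (exp t))). nra. }
  assert (Hlip : forall t1 t2, t1 <= t2 < ln b -> (forall t, t1 <= t <= t2 -> f (exp t) <> 0) ->
            Rabs (weight f (exp t2) - weight f (exp t1)) <= (2 + K) * (t2 - t1)).
  { intros t1 t2 Ht Hnz. apply (weight_exp_lipschitz b f K t1 t2 Hsf HK); [lra|].
    intros t Htt. split; [apply Hin; lra|apply Hnz, Htt]. }
  pose proof (W_half_stable (ln b) (2 + K) (fun t => f (exp t))
                (fun t => exp t * Derive f (exp t)) (fun t => weight f (exp t))
                ltac:(lra) HF HW Hlip (weight_exp_vanishes_at_end b f Hb Hkappa)
                (ln x) (ln y)) as Hstable.
  cbv beta in Hstable. rewrite !exp_ln in Hstable by lra.
  destruct Hstable as [Hyb HFy]; [apply ln_increasing; lra|exact Fx|exact Hgap|].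
  split; [|exact HFy]. rewrite <- (exp_ln y) by exact Hy. apply exp_lt_of_lt_ln; assumption.
Qed.

Lemma kappa_finite (f : R -> R) (x k : R) :
  x <> 0 -> kappa f x = Finite k -> f x <> 0 /\ k = Rabs (elasticity f x).
Proof.
  intros Hx Hk.
  assert (Fx : f x <> 0).
  { intros Fx. unfold kappa in Hk.
    destruct (Req_EM_T x 0); [contradiction|].
    destruct (Req_EM_T (f x) 0); [discriminate|contradiction]. }
  rewrite kappa_elasticity in Hk by assumption. injection Hk as Hk.
  split; [exact Fx|symmetry; exact Hk].
Qed.

Lemma amenable_of_weight_ball (b : R) (f : R -> R) (L : R) :
  0 <= L ->
  (forall x y, 0 < x < b -> f x <> 0 -> 0 < y -> 2 * L * Rabs (ln y - ln x) < weight f x ->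
     y < b /\ f y <> 0 /\ weight f x / 2 < weight f y) ->
  amenable_on_interval b f.
Proof.
  intros HL Hstable. exists (2 * L + 4). split; [lra|].
  intros x k Hx Hk m. set (C := 2 * L + 4).
  destruct (kappa_finite f x k ltac:(lra) Hk) as [Fx Hkx].
  destruct (weight_bounds f x) as [_ [_ [Hwx _]]]. rewrite <- Hkx in Hwx. fold m in Hwx.
  assert (Hm : 1 <= m) by (unfold m; rewrite Hkx; pose proof (Rabs_pos (elasticity f x)); lra).
  assert (Hinvm : 0 < / m) by (apply Rinv_0_lt_compat; lra).
  assert (Hball : forall y, Rbar_lt (reldist y x) (Finite (1 / (C * m))) ->
            0 < y < b /\ f y <> 0 /\ weight f x / 2 < weight f y).
  { intros y Hy. destruct (reldist_lt x y _ (proj1 Hx) Hy) as [Hy0 Hd].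
    destruct (Hstable x y Hx Fx Hy0) as [Hyb HFy]; [|split; [split|]; assumption].
    unfold Rdiv in Hd. rewrite Rinv_mult, Rmult_1_l in Hd.
    assert (HCinv : 2 * L * / C < 1)
      by (apply Rmult_lt_reg_r with C; [unfold C; lra|]; rewrite Rmult_assoc, Rinv_l;
          unfold C; lra).
    pose proof (Rabs_pos (ln y - ln x)).
    assert (2 * L * Rabs (ln y - ln x) <= 2 * L * (/ C * / m)) by nra.
    nra. }
  split; [intros y Hy; apply Hball, Hy|].
  intros y Hy. destruct (Hball y Hy) as [Hyb [Fy Hwy]].
  eapply Rbar_le_trans; [apply mu_le_weight; [lra|exact Fy]|]. simpl.
  assert (Hwy2 : / (2 * m) < weight f y)
    by (rewrite Rinv_mult; apply Rle_lt_trans with (weight f x / 2); lra).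
  assert (Hinv : / weight f y < 2 * m).
  { rewrite <- (Rinv_inv (2 * m)). apply Rinv_lt_contravar; [|exact Hwy2].
    apply Rmult_lt_0_compat; [apply Rinv_0_lt_compat; lra|lra]. }
  unfold C, Rdiv. nra.
Qed.

Theorem proposition3 (b : R) (f : R -> R)
  (hb : 0 < b)
  (hanalytic : real_analytic_on 0 b f)
  (hnonzero : exists x, 0 < x < b /\ f x <> 0)
  (* (1a) kappa(f,x) -> +oo as x -> b *)
  (h1b : forall M : R, exists delta, 0 < delta /\
           forall x, b - delta < x < b -> Rbar_le (Finite M) (kappa f x))
  (* (1b) along sequences x_j -> 0 with dist(x_j, I) -> 0, kappa -> +oo *)
  (h10 : forall u : nat -> R,
           (forall j, 0 < u j < b) ->
           is_lim_seq u 0 ->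
           (forall eps, 0 < eps -> exists N, forall j, (N <= j)%nat ->
              Rbar_lt (reldist_set (u j) (fun s => 0 < s < b /\ f s = 0))
                      (Finite eps)) ->
           forall M : R, exists N, forall j, (N <= j)%nat ->
              Rbar_le (Finite M) (kappa f (u j)))
  (* (2) limsup |H(f,x)| <= C both as x -> 0+ and as x -> b- *)
  (h2 : exists C, 0 < C /\
          (forall eps, 0 < eps -> exists delta, 0 < delta /\
             forall x, 0 < x < b -> x < delta -> Rabs (Hf f x) <= C + eps) /\
          (forall eps, 0 < eps -> exists delta, 0 < delta /\
             forall x, 0 < x < b -> b - delta < x -> Rabs (Hf f x) <= C + eps)) :
  amenable_on_interval b f.
Proof.
  destruct h2 as [C [_ [Hnear0 Hnearb]]].
  destruct (Hf_bounded b f hanalytic) as [K [HK0 HK]].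
  { destruct (Hnear0 1 Rlt_0_1) as [d [Hd Hle]]. exists d, (C + 1). split; assumption. }
  { destruct (Hnearb 1 Rlt_0_1) as [d [Hd Hle]]. exists d, (C + 1). split; assumption. }
  apply (amenable_of_weight_ball b f (2 + K)); [lra|].
  exact (weight_half_stable b f K hb hanalytic HK0 HK h1b).
Qed.
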